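(* Let $p,q\ge 1$ be coprime integers, $n=p+q$, and let $\mathsf{T}_c$ be the lower Christoffel word of length $n$ determined by $p$ and $q$. Then $\mathsf{SA}_{\mathsf{T}_c}$ is the arithmetically progressed permutation with first entry $\mathsf{SA}_{\mathsf{T}_c}[1]=1$ and ratio $k=q^{-1}$, the multiplicative inverse of $q$ modulo $n$. Equivalently, $\mathsf{T}_c$ equals the binary string $\mathsf{T}$ defined by $\mathsf{T}[i]=\mathtt{a}$ if $i\in\{P[1],\ldots,P[s]\}$ and $\mathtt{b}$ otherwise, where $P$ is that permutation and $s$ is the index with $P[s]=n-k$.
   Context: Alphabet $\{\mathtt{a}<\mathtt{b}\}$; lexicographic order with a proper prefix smaller than the longer string; suffix array $\mathsf{SA}_{\mathsf{T}}$: permutation of $[1..n]$ such that $\mathsf{T}[\mathsf{SA}_{\mathsf{T}}[i]..n]$ is the $i$-th smallest suffix. $x\bmod n$ denotes the representative of $x$ modulo $n$ in $[1..n]$; $x\operatorname{mod}_0 n$ denotes the representative in $[0..n-1]$. An arithmetically progressed permutation of length $n$ with ratio $k\in[1..n-1]$ is a permutation $P$ of $[1..n]$ with $P[i+1]=P[i]+k\bmod n$. Lower Christoffel word determined by coprime $p,q\ge1$: the string $\mathsf{T}_c$ of length $n=p+q$ with, for $i\in[1..n]$, $\mathsf{T}_c[i]=\mathtt{a}$ if $(i-1)q\operatorname{mod}_0 n< iq\operatorname{mod}_0 n$ and $\mathsf{T}_c[i]=\mathtt{b}$ otherwise. (Geometrically, this is the lattice path from $(0,0)$ to $(p,q)$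 with $\mathtt{a}$ = unit step right and $\mathtt{b}$ = unit step up, lying below the segment from $(0,0)$ to $(p,q)$ and enclosing with it no lattice points.) *)

From mathcomp Require Import all_boot.
Set Implicit Arguments. Unset Strict Implicit. Unset Printing Implicit Defensive.

Definition la : bool := false.
Definition lb : bool := true.

Definition letter_lt (x y : bool) : bool := (x == la) && (y == lb).

Fixpoint lex_lt (s t : seq bool) : bool :=
  match s, t with
  | [::], [::] => false
  | [::], _ :: _ => true
  | _ :: _, [::] => false
  | x :: s', y :: t' => letter_lt x y || ((x == y) && lex_lt s' t')
  end.

(* 1-indexed access T[i], and suffix T[i..n] *)
Definition letter_at (T : seq bool) (i : nat) : bool := nth la T i.-1.
Definition suffix (T : seq bool) (i : nat) : seq bool := drop i.-1 T.

(* SA : nat -> nat (values at 1..n used) is the suffix array of T (n = size T):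
   a permutation of [1..n] such that T[SA i..n] is the i-th smallest suffix. *)
Definition is_suffix_array (T : seq bool) (SA : nat -> nat) : Prop :=
  let n := size T in
  (forall i, 1 <= i <= n -> 1 <= SA i <= n) /\
  (forall i j, 1 <= i <= n -> 1 <= j <= n -> SA i = SA j -> i = j) /\
  (forall i, 1 <= i < n -> lex_lt (suffix T (SA i)) (suffix T (SA i.+1))).

(* x mod n, representative in [1..n] *)
Definition mod1 (x n : nat) : nat := (x + n).-1 %% n + 1.

(* The arithmetic progression P with P[1] = first and P[i+1] = P[i] + k mod n
   (1-indexed; P i for i >= 1). *)
Definition ap_seq (n k first : nat) (i : nat) : nat :=
  iter i.-1 (fun x => mod1 (x + k) n) first.

Definition christoffel (p q : nat) : seq bool :=
  let n := p + q in
  mkseq (fun j => if ((j * q) %% n < (j.+1 * q) %% n) then la else lb) n.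

(* Let n = p + q and write height u = u q mod n for the (reduced) height of
   the Christoffel lattice path after u steps.  The (u+1)-st letter of the
   word is b exactly when height u >= p (christoffel_nth).  Two suffixes whose
   starting heights differ by one are compared by walking along them: while
   their letters agree the heights keep differing by one, so the suffix of
   greater height cannot end first and the first mismatch is an a against a b
   (christoffel_suffix_lt).  Hence sorting the suffixes amounts to sorting
   their starting positions by height.  If k q = 1 mod n, the arithmetic
   progression P = 1, 1 + k, 1 + 2k, ... (mod n) is the inverse of the height
   map (height_ap, ap_height), so P is the suffix array.  Finally the letters
   a sit at heights 0..p-1, i.e. at the first p entries of P, and p is also
   the index s with P s = n - k (ap_index_of_last_a, mem_ap_prefix). *)

From mathcomp Require Import all_boot zify.

Lemma ap_seqE n k first j : 1 <= first <= n ->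
  ap_seq n k first j = ((first.-1 + j.-1 * k) %% n).+1.
Proof.
move=> first_in; rewrite /ap_seq; elim: j.-1 => [|t IHt] /=.
  by rewrite addn0 modn_small; lia.
rewrite IHt /mod1 !addSn /= addn1 modnDr modnDml mulSn.
by rewrite -addnA [k + _]addnC.
Qed.

Section Christoffel.

Variables p q : nat.
Hypotheses (p_gt0 : 0 < p) (q_gt0 : 0 < q).

Local Notation n := (p + q).
Local Notation T := (christoffel p q).

Definition height (u : nat) : nat := (u * q) %% n.

Lemma size_christoffel : size T = n.
Proof. by rewrite size_mkseq. Qed.

Lemma height_lt u : height u < n.
Proof. by rewrite ltn_mod; lia. Qed.

Lemma heightS u : height u.+1 = (height u + q) %% n.
Proof. by rewrite /height mulSn addnC modnDml. Qed.

(* The (u+1)-st letter of the word is b exactly when the height after u steps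
   is at least p, i.e. when one more up-step would cross the level n. *)
Lemma christoffel_nth u : u < n -> nth la T u = (p <= height u).
Proof.
move=> u_lt; rewrite nth_mkseq // -/(height u) -/(height u.+1) heightS.
have := height_lt u; case: (ltnP (height u + q) n) => [no_wrap|wraps] h.
  rewrite modn_small // ifT; last lia.
  by apply/esym/negbTE; rewrite -ltnNge; lia.
rewrite -(subnK wraps) modnDr modn_small; last lia.
rewrite ifF; last by apply/negbTE; rewrite -leqNgt; lia.
by rewrite /lb; apply/esym/idP; lia.
Qed.

(* The last position of the word is at height p, since (n - 1) q = -q = p
   modulo n. *)
Lemma height_last : height n.-1 = p.
Proof.
rewrite /height; move: q_gt0; case: q => // q' _.
have split_last : (p + q'.+1).-1 * q'.+1 = q' * (p + q'.+1) + p.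
  by rewrite addnS /= !mulnS mulnDl mulnDr [p * _]mulnC; lia.
by rewrite split_last modnMDl modn_small; lia.
Qed.

(* If the heights at v and v' differ by one and the letters there agree, then
   the heights one step further still differ by one: both paths cross the
   level n at the same time. *)
Lemma height_gap_step v v' : height v' = (height v).+1 ->
  (p <= height v) = (p <= height v') -> height v'.+1 = (height v.+1).+1.
Proof.
move=> gap same_letter; rewrite !heightS gap.
have := height_lt v'; rewrite gap => h.
case: (ltnP (height v + q) n) => [no_wrap|wraps].
  by rewrite !modn_small //; move: same_letter; rewrite gap; case: ltngtP; lia.
have shiftL : (height v).+1 + q = (height v + q - n).+1 + n by lia.
have shiftR : height v + q = height v + q - n + n by lia.
by rewrite [in LHS]shiftL [in RHS]shiftR !modnDr !modn_small; lia.
Qed.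

(* Walk along both
   suffixes while the letters agree; the heights keep differing by one, so the
   second suffix cannot end first, and the first disagreement is an a against
   a b. *)
Lemma christoffel_suffix_lt v v' : v <= n -> v' <= n ->
  height v' = (height v).+1 -> lex_lt (drop v T) (drop v' T).
Proof.
have [m] := ubnP (n - v'); elim: m v v' => // m IHm v v' lt_m v_le v'_le gap.
have v'_lt : v' < n.
  rewrite ltn_neqAle v'_le andbT; apply/eqP => v'_n.
  by move: gap; rewrite v'_n /height modnMr.
rewrite [drop v' T](drop_nth la) ?size_christoffel //.
case: (ltnP v n) => [v_lt|v_ge]; last by rewrite drop_oversize ?size_christoffel.
rewrite (drop_nth la) ?size_christoffel //= !christoffel_nth //.
have [same|differ] := boolP ((p <= height v) == (p <= height v')).
  apply/orP; right; apply: IHm; try lia.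
  exact: height_gap_step (eqP same).
move: differ; rewrite gap.
have [_|above] := ltnP (height v) p; last by rewrite (leqW above).
by case: (p <= _).
Qed.

Variable k : nat.
Hypothesis kq_inv : (k * q) %% n = 1.

Local Notation P := (ap_seq n k 1).

Lemma apE j : P j = ((j.-1 * k) %% n).+1.
Proof. by rewrite ap_seqE //; lia. Qed.

Lemma ap_in j : 1 <= P j <= n.
Proof. by rewrite apE ltn_mod; lia. Qed.

Lemma height_ap j : 1 <= j <= n -> height (P j).-1 = j.-1.
Proof.
move=> j_in; rewrite apE /height /= modnMml -mulnA -modnMmr kq_inv muln1.
by rewrite modn_small; lia.
Qed.

Lemma ap_height u : u < n -> P (height u).+1 = u.+1.
Proof.
move=> u_lt; rewrite apE /height /= modnMml -mulnA [q * k]mulnC -modnMmr.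
by rewrite kq_inv muln1 modn_small.
Qed.

Lemma ap_inj i j : 1 <= i <= n -> 1 <= j <= n -> P i = P j -> i = j.
Proof.
move=> i_in j_in eq_ij; have := height_ap _ i_in.
by rewrite eq_ij height_ap //; lia.
Qed.

(* P lists the suffixes by increasing height, hence in lexicographic order. *)
Lemma ap_suffix_array : is_suffix_array T P.
Proof.
rewrite /is_suffix_array size_christoffel; split; [|split].
- by move=> i _; apply: ap_in.
- exact: ap_inj.
- move=> i i_in; rewrite /suffix; apply: christoffel_suffix_lt.
  + by have := ap_in i; lia.
  + by have := ap_in i.+1; lia.
  + by rewrite !height_ap //; lia.
Qed.

Lemma height_add_k v : height (v + k) = (height v).+1 %% n.
Proof. by rewrite /height mulnDl -modnDm kq_inv addn1. Qed.

Lemma ap_index_of_last_a s : 1 <= s <= n -> P s = n - k -> s = p.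
Proof.
move=> s_in Ps; have := ap_in s; rewrite Ps => last_in.
have at_last : (n - k).-1 + k = n.-1 by lia.
have := height_last; rewrite -at_last height_add_k -Ps height_ap // prednK; last lia.
have [s_lt|s_ge] := ltnP s n; first by rewrite modn_small.
have s_n : s = n by lia.
by rewrite s_n modnn; lia.
Qed.

Lemma mem_ap_prefix i s : 1 <= i <= n -> s <= n ->
  (i \in [seq P j | j <- iota 1 s]) = (height i.-1 < s).
Proof.
move=> i_in s_le; apply/mapP/idP => [[j] | below].
  by rewrite mem_iota => j_in ->; rewrite height_ap; lia.
exists (height i.-1).+1; first by rewrite mem_iota; lia.
by rewrite ap_height; lia.
Qed.

End Christoffel.

Theorem theorem12 (p q : nat) :
  1 <= p -> 1 <= q -> coprime p q ->
  forall k : nat, 1 <= k <= (p + q).-1 -> (k * q) %% (p + q) = 1 ->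
  let n := p + q in
  let P := ap_seq n k 1 in
  is_suffix_array (christoffel p q) P /\
  (forall s : nat, 1 <= s <= n -> P s = n - k ->
     forall i : nat, 1 <= i <= n ->
       letter_at (christoffel p q) i =
       (if i \in [seq P j | j <- iota 1 s] then la else lb)).
Proof.
move=> p_gt0 q_gt0 _ k _ kq_inv n P.
split; first exact: ap_suffix_array.
move=> s s_in Ps i i_in.
have -> := ap_index_of_last_a _ _ p_gt0 q_gt0 _ kq_inv _ s_in Ps.
rewrite mem_ap_prefix //; last lia.
rewrite /letter_at christoffel_nth //; last lia.
by case: ltnP.
Qed.
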